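(* Let $\varphi$ be a read-once Boolean formula over the variables $x_1,\dots,x_n$ (each variable occurs exactly once), built from the unary operator $\neg$ and the binary operators $\wedge,\vee,\oplus$, and fix a truth assignment to $x_1,\dots,x_n$. Let $r$ be the root of the parse tree of $\varphi$. Then $\mathrm{DEPENDS}(r)$, defined below, equals the smallest number of variables of $\varphi$ whose values must be changed in order to change the value of $\varphi$.
   Context: The parse tree of $\varphi$ has the variables as leaves and the operator occurrences (gates) as internal nodes; under the fixed assignment every node $g$ has a Boolean value (the value of the subformula rooted at $g$). For an internal node $g$ with $g=g_l\circ g_r$, $\circ\in\{\wedge,\vee,\oplus\}$, define $\mathcal{I}(g)$ as follows, in this order of priority: $\mathcal{I}(g)=\text{Either}$ if negating the value of $g_l$ alone changes the value of $g$ and negating the value of $g_r$ alone changes the value of $g$; otherwise $\mathcal{I}(g)=\text{Left}$ if negating the value of $g_l$ alone changes the value of $g$; otherwise $\mathcal{I}(g)=\text{Right}$ if negating the value of $g_r$ alone changes the value of $g$; otherwise $\mathcal{I}(g)=\text{Both}$ (negating both values changes $g$). For $g=\neg g_l$, $\mathcal{I}(g)=\text{Pass}$. The recursive procedure $\mathrm{DEPENDS}$ assigns to each node $g$ an integer $\mathrm{deps}(g)$ and returns it: if $g$ is a leaf, $\mathrm{deps}(g)=1$; otherwise, with $d_l=\mathrm{DEPENDS}(g_l)$ and $d_r=\mathrm{DEPENDS}(g_r)$ (only $d_l$ when $g=\neg g_l$), $\mathrm{deps}(g)=d_l+d_r$ if $\mathcal{I}(g)=\text{Both}$, $\min\{d_l,d_r\}$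 if Either, $d_l$ if Left, $d_r$ if Right, and $d_l$ if Pass. *)

From mathcomp Require Import all_boot.
Set Implicit Arguments. Unset Strict Implicit. Unset Printing Implicit Defensive.

Inductive binop := OAnd | OOr | OXor.

Definition eval_op (o : binop) (b c : bool) : bool :=
  match o with OAnd => b && c | OOr => b || c | OXor => xorb b c end.

(* Boolean formulas over variables x_0, ..., x_{n-1}; the constructors are the
   nodes of the parse tree (leaves = variable occurrences, internal nodes = gates). *)
Inductive formula (n : nat) :=
| FVar of 'I_n
| FNot of formula n
| FBin of binop & formula n & formula n.

Arguments FVar {n}. Arguments FNot {n}. Arguments FBin {n}.

Fixpoint eval n (a : 'I_n -> bool) (f : formula n) : bool :=
  match f with
  | FVar i => a i
  | FNot g => ~~ eval a g
  | FBin o l r => eval_op o (eval a l) (eval a r)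
  end.

Fixpoint vars n (f : formula n) : seq 'I_n :=
  match f with
  | FVar i => [:: i]
  | FNot g => vars g
  | FBin _ l r => vars l ++ vars r
  end.

Definition read_once n (f : formula n) : Prop := perm_eq (vars f) (enum 'I_n).

(* The procedure DEPENDS, with the classification I(g) inlined:
   cl = negating g_l alone changes g, cr = negating g_r alone changes g;
   Either -> min, Left -> d_l, Right -> d_r, Both -> d_l + d_r, Pass -> d_l. *)
Fixpoint depends n (a : 'I_n -> bool) (f : formula n) : nat :=
  match f with
  | FVar _ => 1
  | FNot g => depends a g
  | FBin o l r =>
      let vl := eval a l in
      let vr := eval a r in
      let v := eval_op o vl vr in
      let cl := eval_op o (~~ vl) vr != v in
      let cr := eval_op o vl (~~ vr) != v in
      let dl := depends a l in
      let dr := depends a r in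
      if cl && cr then minn dl dr
      else if cl then dl
      else if cr then dr
      else dl + dr
  end.

Definition nchanged n (a b : 'I_n -> bool) : nat := #|[set i | a i != b i]|.

From mathcomp Require Import all_boot.
From mathcomp Require Import zify.
Set Implicit Arguments.
Unset Strict Implicit.
Unset Printing Implicit Defensive.

(* DEPENDS computes, gate by gate, the cheapest way to flip the output: a gate
   of value v with children values vl, vr and children costs dl, dr can be
   flipped at cost min {[xl != vl] dl + [xr != vr] dr | op xl xr != v}.  In a
   read-once formula the children read disjoint sets of variables, so changes
   made in the two subtrees can be combined freely and their costs add up;
   induction on the formula then shows that DEPENDS is both a lower bound and
   attained. *)

Definition depends_gate (o : binop) (vl vr : bool) (dl dr : nat) : nat :=
  let v := eval_op o vl vr in
  let cl := eval_op o (~~ vl) vr != v in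
  let cr := eval_op o vl (~~ vr) != v in
  if cl && cr then minn dl dr
  else if cl then dl
  else if cr then dr
  else dl + dr.

Lemma depends_bin n (a : 'I_n -> bool) o (l r : formula n) :
  depends a (FBin o l r) =
  depends_gate o (eval a l) (eval a r) (depends a l) (depends a r).
Proof. by []. Qed.

Lemma depends_gate_le o vl vr dl dr xl xr :
  (eval_op o xl xr != eval_op o vl vr) * depends_gate o vl vr dl dr <=
  (xl != vl) * dl + (xr != vr) * dr.
Proof.
by rewrite /depends_gate; case: o; case: xl; case: xr; case: vl; case: vr => /=; lia.
Qed.

Lemma depends_gate_attained o vl vr dl dr x :
  exists xl xr, eval_op o xl xr = x /\
    (x != eval_op o vl vr) * depends_gate o vl vr dl dr =
    (xl != vl) * dl + (xr != vr) * dr.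
Proof.
rewrite /depends_gate.
case: o; case: x; case: vl; case: vr; case: (leqP dl dr) => le_dl_dr /=;
  first [ by exists true, true; split; [|lia]
        | by exists true, false; split; [|lia]
        | by exists false, true; split; [|lia]
        | by exists false, false; split; [|lia] ].
Qed.

Lemma eq_in_eval n (a b : 'I_n -> bool) (g : formula n) :
  {in vars g, a =1 b} -> eval a g = eval b g.
Proof.
elim: g => [i|g IHg|o l IHl r IHr] /= eq_ab; first by apply: eq_ab; rewrite inE.
  by rewrite IHg.
by rewrite IHl ?IHr // => i gi; apply: eq_ab; rewrite mem_cat gi ?orbT.
Qed.

Definition nchanged_on n (s : seq 'I_n) (a b : 'I_n -> bool) : nat :=
  count (fun i => a i != b i) s.

Lemma nchanged_onE n (s : seq 'I_n) (a b : 'I_n -> bool) :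
  perm_eq s (enum 'I_n) -> nchanged_on s a b = nchanged a b.
Proof.
move=> /permP s_enum; rewrite /nchanged_on /nchanged s_enum.
by rewrite enumT cardsE cardE size_filter.
Qed.

Lemma depends_le_nchanged_on n (a b : 'I_n -> bool) (g : formula n) :
  (eval b g != eval a g) * depends a g <= nchanged_on (vars g) a b.
Proof.
rewrite /nchanged_on; elim: g => [i|g IHg|o l IHl r IHr] /=.
- by rewrite eq_sym addn0 muln1.
- by rewrite eqb_negLR negbK.
- rewrite count_cat; apply: leq_trans (depends_gate_le _ _ _ _ _ _ _) _.
  exact: leq_add.
Qed.

Lemma depends_attained n (a : 'I_n -> bool) (g : formula n) (x : bool) :
  uniq (vars g) ->
  exists b, eval b g = x /\ nchanged_on (vars g) a b = (x != eval a g) * depends a g.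
Proof.
rewrite /nchanged_on; elim: g x => [i|g IHg|o l IHl r IHr] x; rewrite ?depends_bin /=.
- by move=> _; exists (fun=> x); rewrite addn0 muln1 eq_sym.
- move=> /(IHg (~~ x)) [b [bx cb]]; exists b; rewrite bx negbK cb {b bx cb}.
  by case: x; case: (eval a g).
rewrite cat_uniq => /and3P [ul disj ur].
have [xl [xr [xlr costx]]] :=
  depends_gate_attained o (eval a l) (eval a r) (depends a l) (depends a r) x.
have [bl [blx cbl]] := IHl xl ul; have [br [brx cbr]] := IHr xr ur.
pose b i := if i \in vars l then bl i else br i.
have b_l : {in vars l, b =1 bl} by move=> i li; rewrite /b li.
have b_r : {in vars r, b =1 br}.
  by move=> i ri; rewrite /b ifN //; apply: contra disj => li; apply/hasP; exists i.
exists b; rewrite (eq_in_eval b_l) (eq_in_eval b_r) blx brx costx.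
rewrite count_cat -cbl -cbr; split=> //; congr (_ + _); apply: eq_in_count.
  by move=> i /b_l ->.
by move=> i /b_r ->.
Qed.

Theorem lemma1 (n : nat) (phi : formula n) (a : 'I_n -> bool) :
  read_once phi ->
  (exists b : 'I_n -> bool, eval b phi != eval a phi /\ nchanged a b = depends a phi) /\
  (forall b : 'I_n -> bool, eval b phi != eval a phi -> depends a phi <= nchanged a b).
Proof.
move=> ro; have uphi : uniq (vars phi) by rewrite (perm_uniq ro) enum_uniq.
split.
  have [b [b_flip cb]] := depends_attained a (~~ eval a phi) uphi.
  have flipped : ~~ eval a phi != eval a phi by case: (eval a phi).
  by exists b; rewrite -(nchanged_onE _ _ ro) cb b_flip flipped mul1n.
move=> b b_flip; rewrite -(nchanged_onE _ _ ro).
by have := depends_le_nchanged_on a b phi; rewrite b_flip mul1n.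
Qed.
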